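(* Let $n$ be a positive integer and let $A(n)=(a_{ij})_{i,j\in\mathbb{N}}$ be the greedy matrix described in the context. Then $A(n)$ is symmetric: $a_{ij}=a_{ji}$ for all $i,j\geq 1$.
   Context: $\mathbb{N}=\{1,2,3,\dots\}$. Fix a positive integer $n$. The infinite $\{0,1\}$-matrix $A(n)=(a_{ij})_{i,j\in\mathbb{N}}$ is defined recursively. Its entries are determined row by row (row $1$ first), and within each row from left to right, so that $a_{kl}$ is determined after all $a_{ij}$ with $i<k$ and all $a_{kj}$ with $j<l$. One sets $a_{kl}=1$ if and only if all of the following hold: (1) $\sum_{j<l}a_{kj}<n+1$; (2) $\sum_{i<k}a_{il}<n+1$; (3) there is no pair $(i,j)$ with $1\le i<k$, $1\le j<l$ and $a_{ij}=a_{il}=a_{kj}=1$. Otherwise $a_{kl}=0$. *)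

From mathcomp Require Import all_boot.
Set Implicit Arguments. Unset Strict Implicit. Unset Printing Implicit Defensive.

(* An infinite {0,1}-matrix is a function a : nat -> nat -> bool; only the
   entries a i j with i, j >= 1 are meaningful (N = {1,2,3,...}).
   [greedy_rule n a] says that every entry a k l (k, l >= 1) is obtained by the
   greedy rule of the paper from the previously determined entries:
   a k l = 1 iff
   (1) sum_{1<=j<l} a k j < n+1,
   (2) sum_{1<=i<k} a i l < n+1,
   (3) there is no (i,j) with 1<=i<k, 1<=j<l and a i j = a i l = a k j = 1.
   Since the right-hand side only refers to entries determined earlier in the
   row-by-row / left-to-right order, this rule determines a uniquely on
   positive indices: it is exactly the matrix A(n). *)
Definition greedy_rule (n : nat) (a : nat -> nat -> bool) : Prop :=
  forall k l : nat, 0 < k -> 0 < l ->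
    a k l =
    [&& \sum_(1 <= j < l) a k j < n.+1,
        \sum_(1 <= i < k) a i l < n.+1 &
        ~~ [exists i : 'I_k, exists j : 'I_l,
              [&& 0 < (i : nat), 0 < (j : nat), a i j, a i l & a k j]]].

From mathcomp Require Import all_boot zify.

(* The greedy rule determines A(n) uniquely, since each entry is computed from
   entries with a smaller index sum.  The rule is invariant under transposition:
   conditions (1) and (2) are exchanged, and condition (3) is symmetric in the
   roles of rows and columns.  Hence the transpose of A(n) satisfies the rule as
   well, and uniqueness forces it to equal A(n). *)

Section GreedyRule.

Context {n : nat}.

Definition greedy_entry (a : nat -> nat -> bool) (k l : nat) : bool :=
  [&& \sum_(1 <= j < l) a k j < n.+1,
      \sum_(1 <= i < k) a i l < n.+1 &
      ~~ [exists i : 'I_k, exists j : 'I_l,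
            [&& 0 < (i : nat), 0 < (j : nat), a i j, a i l & a k j]]].

Lemma greedy_ruleE {a : nat -> nat -> bool} :
  greedy_rule n a -> forall k l, 0 < k -> 0 < l -> a k l = greedy_entry a k l.
Proof. by []. Qed.

Lemma eq_greedy_entry (a b : nat -> nat -> bool) (k l : nat) :
  0 < k -> 0 < l ->
  (forall i j, 0 < i -> 0 < j -> i + j < k + l -> a i j = b i j) ->
  greedy_entry a k l = greedy_entry b k l.
Proof.
move=> k_gt0 l_gt0 eq_ab; rewrite /greedy_entry.
have -> : \sum_(1 <= j < l) a k j = \sum_(1 <= j < l) b k j.
  by apply: eq_big_nat => j /andP[j_gt0 lt_jl]; rewrite eq_ab //; lia.
have -> : \sum_(1 <= i < k) a i l = \sum_(1 <= i < k) b i l.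
  by apply: eq_big_nat => i /andP[i_gt0 lt_ik]; rewrite eq_ab //; lia.
congr [&& _, _ & ~~ _]; apply: eq_existsb => i; apply: eq_existsb => j.
have lt_ik := ltn_ord i; have lt_jl := ltn_ord j.
case: (posnP i) => [-> | i_gt0] //; case: (posnP j) => [-> | j_gt0] //=.
by rewrite !eq_ab // ?ltn_add2l ?ltn_add2r // -addnS leq_add // ltnW.
Qed.

Lemma greedy_rule_uniq {a b : nat -> nat -> bool} :
  greedy_rule n a -> greedy_rule n b ->
  forall k l, 0 < k -> 0 < l -> a k l = b k l.
Proof.
move=> rule_a rule_b k l.
elim: {k l}(k + l) {-2}k {-2}l (leqnn (k + l)) => [|s IHs] k l le_kl_s k_gt0 l_gt0.
  by move: le_kl_s; lia.
rewrite (greedy_ruleE rule_a) // (greedy_ruleE rule_b) //.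
apply: eq_greedy_entry => // i j i_gt0 j_gt0 lt_ij_kl.
by apply: IHs => //; rewrite -ltnS (leq_trans lt_ij_kl).
Qed.

Lemma greedy_rule_tr {a : nat -> nat -> bool} :
  greedy_rule n a -> greedy_rule n (fun i j => a j i).
Proof.
move=> rule_a k l k_gt0 l_gt0 /=; rewrite (greedy_ruleE rule_a) // /greedy_entry.
rewrite andbA [X in X && _]andbC -andbA; congr [&& _, _ & ~~ _].
by apply/existsP/existsP=> -[i /existsP[j /and5P[i_gt0 j_gt0 aij ail akj]]];
  exists j; apply/existsP; exists i; apply/and5P.
Qed.

End GreedyRule.

Theorem theorem3p2 (n : nat) (a : nat -> nat -> bool) :
  0 < n -> greedy_rule n a ->
  forall i j : nat, 0 < i -> 0 < j -> a i j = a j i.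
Proof.
move=> _ rule_a i j i_gt0 j_gt0.
exact: (greedy_rule_uniq rule_a (greedy_rule_tr rule_a) i j i_gt0 j_gt0).
Qed.
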